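(* For each odd prime $p$ there are infinitely many primes $q$ with $q\equiv1\pmod p$ such that $q\not\equiv1\pmod{p^2}$ and $p$ is not a $p$-th power modulo $q$. *)

From mathcomp Require Import all_boot.

Definition pth_power_mod (p a q : nat) : Prop :=
  exists x : nat, x ^ p = a %[mod q].

From mathcomp Require Import all_boot.
From mathcomp Require Import cyclic.

(* Take a = p c^p, where c is the product of all i <= N prime to p, and let q
   be a prime factor of 1 + a + ... + a^(p-1) with q <> 1 (mod p^2); such a q
   exists because this sum is 1 + a (mod p^2) and p^2 does not divide a.
   Then a has order exactly p modulo q, so q = 1 (mod p), and q > N because q
   does not divide a.  Since p^2 does not divide q - 1, a p-th power modulo q
   whose p-th power is 1 is itself 1; as a is not 1 modulo q, a is not a p-th
   power, and neither is p, for a = p c^p. *)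

Lemma eqn_mod1_dvd q m : 0 < m -> (m == 1 %[mod q]) = (q %| m.-1).
Proof. by move=> m_gt0; rewrite eqn_mod_dvd // subn1. Qed.

Lemma expnM_mod1 {q a m} k : a ^ m = 1 %[mod q] -> a ^ (k * m) = 1 %[mod q].
Proof. by move=> am1; rewrite mulnC expnM -modnXm am1 modnXm exp1n. Qed.

Lemma expn_gcdn_mod1 {q a m n} : 0 < m ->
  a ^ m = 1 %[mod q] -> a ^ n = 1 %[mod q] -> a ^ gcdn m n = 1 %[mod q].
Proof.
move=> m_gt0 am1 an1; have [km kn Bezout _] := egcdnP n m_gt0.
have := expnM_mod1 km am1; rewrite Bezout expnD -modnMml (expnM_mod1 kn an1).
by rewrite modnMml mul1n.
Qed.

Lemma fermat_mod1 {q a} : prime q -> ~~ (q %| a) -> a ^ q.-1 = 1 %[mod q].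
Proof.
move=> qP qa; rewrite -totient_prime // Euler_exp_totient //.
by rewrite coprime_sym prime_coprime.
Qed.

Lemma prime_order_mod1 {p q a} : prime p -> prime q -> ~~ (q %| a) ->
  a ^ p = 1 %[mod q] -> a != 1 %[mod q] -> q = 1 %[mod p].
Proof.
move=> pP qP qa ap1 a_neq1; apply/eqP; rewrite eqn_mod1_dvd ?prime_gt0 //.
apply: contraNT a_neq1; rewrite -prime_coprime // => /eqP gcd1; apply/eqP.
by have := expn_gcdn_mod1 (prime_gt0 pP) ap1 (fermat_mod1 qP qa); rewrite gcd1.
Qed.

Lemma gcdn_sqr_prime p n : prime p -> p %| n -> ~~ (p ^ 2 %| n) ->
  gcdn (p * p) n = p.
Proof.
move=> pP /dvdnP[m ->]; rewrite expnS expn1 dvdn_pmul2r ?prime_gt0 //.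
by rewrite -muln_gcdl -prime_coprime // => /eqP->; rewrite mul1n.
Qed.

Lemma pth_power_modM {p a} b {q} :
  pth_power_mod p a q -> pth_power_mod p (a * b ^ p) q.
Proof. by case=> x xa; exists (x * b); rewrite expnMn -modnMml xa modnMml. Qed.

Lemma pth_power_mod1 {p q a} : prime p -> prime q ->
  q = 1 %[mod p] -> q != 1 %[mod p ^ 2] -> ~~ (q %| a) ->
  a ^ p = 1 %[mod q] -> pth_power_mod p a q -> a = 1 %[mod q].
Proof.
move=> pP qP qp1 qp2 qa ap1 [x xa].
have qx : ~~ (q %| x).
  by apply: contra qa => /(dvdn_exp (prime_gt0 pP)); rewrite /dvdn xa.
have gcd_p : gcdn (p * p) q.-1 = p.
  by apply: gcdn_sqr_prime; rewrite // -eqn_mod1_dvd ?prime_gt0 //; apply/eqP.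
rewrite -xa -gcd_p; apply: expn_gcdn_mod1 (fermat_mod1 qP qx).
- by rewrite muln_gt0 prime_gt0.
- by rewrite expnM -modnXm xa modnXm.
Qed.

Lemma prime_factor_neq1_mod {m n} : 0 < n -> n != 1 %[mod m] ->
  exists r, [/\ prime r, r %| n & r != 1 %[mod m]].
Proof.
elim/ltn_ind: n => n IHn n_gt0 n_neq1.
have n_gt1 : 1 < n by case: n {IHn} n_gt0 n_neq1 => [|[|]] //; rewrite eqxx.
have [r_eq1 | ] := boolP (pdiv n == 1 %[mod m]); last first.
  by exists (pdiv n); rewrite pdiv_prime ?pdiv_dvd.
have pdiv_gt1 := prime_gt1 (pdiv_prime n_gt1).
have nE : n = n %/ pdiv n * pdiv n by rewrite divnK ?pdiv_dvd.
have [|||r [rP r_dvd r_neq1]] := IHn (n %/ pdiv n).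
- by rewrite ltn_Pdiv.
- by rewrite divn_gt0 ?pdiv_gt0 ?pdiv_leq.
- apply: contra n_neq1 => /eqP d_eq1.
  by rewrite nE -modnMml d_eq1 modnMml mul1n.
by exists r; split=> //; rewrite nE dvdn_mulr.
Qed.

Lemma geom_sumS a n : \sum_(i < n.+1) a ^ i = 1 + a * \sum_(i < n) a ^ i.
Proof.
rewrite big_ord_recl big_distrr; congr (_ + _).
by apply: eq_bigr => i _; rewrite /= expnS.
Qed.

Lemma coprime_geom_sum a {n} : 0 < n -> coprime a (\sum_(i < n) a ^ i).
Proof.
case: n => // n _; rewrite geom_sumS -coprime_modr addnC mulnC modnMDl.
by rewrite coprime_modr coprimen1.
Qed.

Lemma geom_sum_mod {q a} n : a = 1 %[mod q] -> \sum_(i < n) a ^ i = n %[mod q].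
Proof.
move=> a1; rewrite -modn_summ (eq_bigr (fun _ => 1 %% q)) => [|i _].
  by rewrite modn_summ sum_nat_const card_ord muln1.
by rewrite -modnXm a1 modnXm exp1n.
Qed.

Lemma dvd_geom_sum_expn_mod1 {q a n} : 0 < a ->
  q %| \sum_(i < n) a ^ i -> a ^ n = 1 %[mod q].
Proof.
move=> a_gt0 q_dvd; apply/eqP; rewrite eqn_mod1_dvd ?expn_gt0 ?a_gt0 //.
by rewrite predn_exp dvdn_mull.
Qed.

Lemma geom_sum_neq1_mod_sqr {p a n} : 1 < n -> p %| a -> ~~ (p ^ 2 %| a) ->
  \sum_(i < n) a ^ i != 1 %[mod p ^ 2].
Proof.
case: n => [|[|n]] // _ pa p2a; apply: contra p2a => /eqP sum1.
have : \sum_(i < n.+2) a ^ i = 1 + a %[mod p ^ 2].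
  rewrite !geom_sumS mulnDr muln1 mulnA addnA.
  have /dvdnP[k ->] : p ^ 2 %| a * a * \sum_(i < n) a ^ i.
    by rewrite mulnn dvdn_mulr // dvdn_exp2r.
  by rewrite addnC modnMDl.
by rewrite sum1 => /eqP; rewrite -{1}[1]addn0 eqn_modDl mod0n eq_sym.
Qed.

Lemma prime_dvd_geom_sum {p q a} : prime p -> prime q -> 0 < a -> p %| a ->
  q %| \sum_(i < p) a ^ i ->
  [/\ ~~ (q %| a), a ^ p = 1 %[mod q], a != 1 %[mod q] & q = 1 %[mod p]].
Proof.
move=> pP qP a_gt0 pa q_dvd.
have qa : ~~ (q %| a).
  apply: contraL q_dvd => qa; rewrite -prime_coprime //.
  exact: coprime_dvdl qa (coprime_geom_sum a (prime_gt0 pP)).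
have ap1 := dvd_geom_sum_expn_mod1 a_gt0 q_dvd.
have a_neq1 : a != 1 %[mod q].
  apply: contra qa => /eqP a1.
  have : q %| p by rewrite /dvdn -(geom_sum_mod p a1).
  by rewrite dvdn_prime2 // => /eqP->.
by split; last exact: prime_order_mod1 pP qP qa ap1 a_neq1.
Qed.

Lemma dvdn_prod_ndvd {p N r} : r <= N -> ~~ (p %| r) ->
  r %| \prod_(i < N.+1 | ~~ (p %| i)) i.
Proof.
rewrite -ltnS => r_lt pr; rewrite (bigD1 (Ordinal r_lt)) //=.
exact: dvdn_mulr.
Qed.

Lemma prime_ndvd_prod_ndvd p N : prime p ->
  ~~ (p %| \prod_(i < N.+1 | ~~ (p %| i)) i).
Proof. by move=> pP; rewrite Euclid_dvd_prod // big1 // => i /negbTE. Qed.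

Theorem proposition5p4 (p : nat) (hp : prime p) (hodd : odd p) :
  forall N : nat, exists q : nat,
    [/\ N < q, prime q, q = 1 %[mod p], q != 1 %[mod p ^ 2]
      & ~ pth_power_mod p p q].
Proof.
move=> N; have p_gt0 := prime_gt0 hp.
pose c := \prod_(i < N.+1 | ~~ (p %| i)) i; pose a := p * c ^ p.
have p_ndvd_c : ~~ (p %| c) by apply: prime_ndvd_prod_ndvd.
have p_dvd_a : p %| a := dvdn_mulr _ (dvdnn p).
have p2_ndvd_a : ~~ (p ^ 2 %| a).
  by rewrite expnS expn1 dvdn_pmul2l // Euclid_dvdX // negb_and p_ndvd_c.
have a_gt0 : 0 < a by rewrite lt0n; apply: contraNneq p2_ndvd_a => ->.
have sum_gt0 : 0 < \sum_(i < p) a ^ i by rewrite -(prednK p_gt0) geom_sumS.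
have [q [qP q_dvd q_neq1]] := prime_factor_neq1_mod sum_gt0
  (geom_sum_neq1_mod_sqr (prime_gt1 hp) p_dvd_a p2_ndvd_a).
have [q_ndvd_a a_p a_neq1 q_p1] := prime_dvd_geom_sum hp qP a_gt0 p_dvd_a q_dvd.
exists q; split=> //.
  have p_ndvd_q : ~~ (p %| q).
    by rewrite dvdn_prime2 //; apply: contraNneq (q_ndvd_a) => <-.
  rewrite ltnNge; apply: contra q_ndvd_a => q_le_N.
  by rewrite dvdn_mull // dvdn_exp // dvdn_prod_ndvd.
move=> /(pth_power_modM c)/(pth_power_mod1 hp qP q_p1 q_neq1 q_ndvd_a a_p) a1.
by rewrite a1 eqxx in a_neq1.
Qed.
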